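(* Every geodesic $s\mapsto\mathbf t(s)$ of the quasi-Euclidean space $(\mathbb{R}^N\setminus\{0\},\,n_{pq}(g;t))$ lies in a two-dimensional linear subspace of $\mathbb{R}^N$ (through the origin); that is, the geodesics are plane curves.
   Context: Let $N\ge2$; $(r_{pq})$ is a symmetric positive-definite $N\times N$ matrix with $r_{NN}=1$, $r_{Na}=0$ ($a<N$), $S(t)=\sqrt{r_{pq}t^pt^q}$, $L_p=r_{pq}t^q/S(t)$. Fix $g\in(-2,2)$, $h=\sqrt{1-g^2/4}$, $G=g/h$. The quasi-Euclidean metric tensor is $n_{pq}(g;t)=\frac1{h^2}r_{pq}-\frac14G^2L_pL_q$, and geodesics are solutions of the Levi-Civita geodesic equation $\frac{d^2t^p}{ds^2}+N_q{}^p{}_r\frac{dt^q}{ds}\frac{dt^r}{ds}=0$, where $N_q{}^p{}_r$ are the Christoffel symbols of $n_{pq}$. *)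

From HB Require Import structures.
From mathcomp Require Import all_boot all_order all_algebra.
From mathcomp Require Import all_classical all_reals all_analysis.
Set Implicit Arguments. Unset Strict Implicit. Unset Printing Implicit Defensive.
Import Order.TTheory GRing.Theory Num.Theory.
Import numFieldNormedType.Exports.
Local Open Scope classical_set_scope.
Local Open Scope ring_scope.

Section QuasiEuclid.
Variables (R : realType) (N : nat).

Definition posdef (r : 'M[R]_N) : Prop :=
  forall v : 'rV[R]_N, v != 0 -> 0 < \sum_(p < N) \sum_(q < N) r p q * v 0 p * v 0 q.

Definition Sfun (r : 'M[R]_N) (t : 'rV[R]_N) : R :=
  Num.sqrt (\sum_(p < N) \sum_(q < N) r p q * t 0 p * t 0 q).

Definition Lfun (r : 'M[R]_N) (t : 'rV[R]_N) (p : 'I_N) : R :=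
  (\sum_(q < N) r p q * t 0 q) / Sfun r t.

Definition hpar (g : R) : R := Num.sqrt (1 - g ^+ 2 / 4).
Definition Gpar (g : R) : R := g / hpar g.

Definition nmetric (g : R) (r : 'M[R]_N) (t : 'rV[R]_N) : 'M[R]_N :=
  \matrix_(p, q) (r p q / hpar g ^+ 2 - Gpar g ^+ 2 / 4 * Lfun r t p * Lfun r t q).

Definition pderiv (F : 'rV[R]_N -> R) (k : 'I_N) (t : 'rV[R]_N) : R :=
  derive1 (fun x : R => F (t + x *: delta_mx 0 k)) 0.

Definition christoffel (g : R) (r : 'M[R]_N) (t : 'rV[R]_N) (q p s : 'I_N) : R :=
  2^-1 * \sum_(m < N) (invmx (nmetric g r t)) p m *
    (pderiv (fun x => nmetric g r x m s) q t
     + pderiv (fun x => nmetric g r x m q) s t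
     - pderiv (fun x => nmetric g r x q s) m t).

Definition coord (c : R -> 'rV[R]_N) (p : 'I_N) : R -> R := fun s => c s 0 p.

Definition is_geodesic (g : R) (r : 'M[R]_N) (I : set R) (c : R -> 'rV[R]_N) : Prop :=
  (forall s, I s -> c s != 0) /\
  (forall s p, I s -> derivable (coord c p) s 1 /\ derivable (derive1 (coord c p)) s 1) /\
  (forall s p, I s ->
     derive1 (derive1 (coord c p)) s
     + \sum_(q < N) \sum_(k < N)
         christoffel g r (c s) q p k * derive1 (coord c q) s * derive1 (coord c k) s = 0).

End QuasiEuclid.

From mathcomp Require Import all_boot all_order all_algebra.
From mathcomp Require Import all_classical all_reals all_analysis.
From mathcomp Require Import ring lra.
Set Implicit Arguments. Unset Strict Implicit. Unset Printing Implicit Defensive.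
Import Order.TTheory GRing.Theory Num.Theory.
Import numFieldNormedType.Exports.
Local Open Scope ring_scope.

(* Since [n t = r t], the Christoffel symbols factor as
   N_q^p_s(t) = -(G^2/4) S(t)^-2 (r_sq - L_q L_s) t^p, so along a geodesic the
   acceleration t'' is a multiple of the position t.  Hence the angular momenta
   W_ij = t^i t'^j - t^j t'^i are constant.  If some W_ab(s0) is nonzero, the
   identity t^j W_ab = t^b W_aj - t^a W_bj puts every t(s) in the plane of t(s0)
   and t'(s0); otherwise t' is parallel to t, the direction t^i t^j / |t|^2 is
   constant and the geodesic is a radial segment. *)

Lemma is_derive_0_is_cst_interval (R : realType) (I : set R) (f : R -> R) :
  is_interval I -> (forall x, I x -> is_derive x 1 f 0) ->
  forall a b, I a -> I b -> f a = f b.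
Proof.
move=> I_itv f'0.
suff le_cst a b : a <= b -> I a -> I b -> f a = f b.
  by move=> a b Ia Ib; case: (leP a b) => [|/ltW] /le_cst; [apply | move/(_ Ib Ia)].
move=> le_ab Ia Ib; have Iab x : a <= x <= b -> I x by apply: I_itv.
have [|| x _] := MVT_segment le_ab (f := f) (df := fun=> 0).
- by move=> x; rewrite in_itv /= => /andP[ax xb]; apply/f'0/Iab; rewrite !ltW.
- apply: continuous_in_subspaceT => x; rewrite inE /= in_itv /= => /Iab/f'0[].
  by move=> /derivable1_diffP/differentiable_continuous.
- by rewrite mul0r => /eqP; rewrite subr_eq0 => /eqP.
Qed.

Lemma is_derive0_quadratic (R : realType) (a b c : R) :
  is_derive (0 : R) 1 (fun x : R => a + x * b + x ^+ 2 * c) b.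
Proof.
have -> : (fun x : R => a + x * b + x ^+ 2 * c) = cst a + @id R * cst b + @id R ^+ 2 * cst c.
  by apply/funext.
apply: is_derive_eq.
by rewrite /= !scaler0 mulr0 !add0r scale0r scaler0 addr0 [_%:A]mulr1.
Qed.

Lemma is_derive0_affine (R : realType) (a b : R) : is_derive (0 : R) 1 (fun x : R => a + x * b) b.
Proof.
have -> : (fun x : R => a + x * b) = (fun x => a + x * b + x ^+ 2 * 0).
  by apply/funext => x; rewrite mulr0 addr0.
exact: is_derive0_quadratic.
Qed.

Lemma sum_mul_delta (T : ringType) (I : finType) (F : I -> T) k :
  \sum_(i : I) F i * (i == k)%:R = F k.
Proof. by rewrite (bigD1 k) //= eqxx mulr1 big1 ?addr0 // => i /negbTE ->; rewrite mulr0. Qed.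

Section PlaneSpan.
Variables (F : fieldType) (N : nat).
Implicit Types x y z : 'rV[F]_N.

Lemma rank_col_mx2 x y a b :
  x 0 a * y 0 b - x 0 b * y 0 a != 0 -> \rank (col_mx x y) = 2%N.
Proof.
move=> minor_neq0; apply/eqP; apply: inj_row_free => u.
rewrite -[u]hsubmxK [lsubmx u]mx11_scalar [rsubmx u]mx11_scalar.
set u0 := lsubmx u 0 0; set u1 := rsubmx u 0 0.
rewrite mul_row_col !mul_scalar_mx => uxy_eq0.
have lin j : u0 * x 0 j + u1 * y 0 j = 0.
  by have := congr1 (fun v : 'rV_N => v 0 j) uxy_eq0; rewrite !mxE.
have u0_eq0 : u0 = 0.
  apply: (mulIf minor_neq0); rewrite mul0r.
  transitivity (y 0 b * (u0 * x 0 a + u1 * y 0 a) - y 0 a * (u0 * x 0 b + u1 * y 0 b));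
    first by ring.
  by rewrite !lin !mulr0 subrr.
have u1_eq0 : u1 = 0.
  apply: (mulIf minor_neq0); rewrite mul0r.
  transitivity (x 0 a * (u0 * x 0 b + u1 * y 0 b) - x 0 b * (u0 * x 0 a + u1 * y 0 a));
    first by ring.
  by rewrite !lin !mulr0 subrr.
by rewrite u0_eq0 u1_eq0 !raddf0 row_mx0.
Qed.

Lemma sub_col_mx2 x y (a b : F) : ((a *: x + b *: y)%R <= col_mx x y)%MS.
Proof.
apply/submxP; exists (row_mx (a%:M : 'M[F]_1) (b%:M : 'M[F]_1)).
by rewrite mul_row_col !mul_scalar_mx.
Qed.

Lemma col_mx_rank2_completion x : (2 <= N)%N -> x != 0 ->
  exists y, \rank (col_mx x y) = 2%N.
Proof.
move=> N_ge2 /rV0Pn[a xa_neq0].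
have [b ba] : exists b : 'I_N, b != a.
  pose i0 : 'I_N := Ordinal (ltnW N_ge2); pose i1 : 'I_N := Ordinal N_ge2.
  by case: (eqVneq a i0) => [->|]; [exists i1 | exists i0; rewrite eq_sym].
exists (delta_mx 0 b); apply: (rank_col_mx2 (a := a) (b := b)).
by rewrite !mxE !eqxx (eq_sym a b) (negbTE ba) mulr1 mulr0 subr0.
Qed.

End PlaneSpan.

Definition planar (R : realType) (N : nat) (I : set R) (c : R -> 'rV[R]_N) : Prop :=
  exists U : 'M[R]_(2, N), \rank U = 2%N /\ (forall s, I s -> (c s <= U)%MS).

Section CentralAcceleration.
Variables (R : realType) (N : nat) (I : set R) (c : R -> 'rV[R]_N) (lam : R -> R).
Local Notation v p := (derive1 (coord c p)).
Hypothesis I_itv : is_interval I.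
Hypothesis c_neq0 : forall s, I s -> c s != 0.
Hypothesis c_derive : forall s p, I s -> is_derive s 1 (coord c p) (v p s).
Hypothesis v_derive : forall s p, I s -> is_derive s 1 (v p) (lam s * c s 0 p).

Definition angular_momentum (i j : 'I_N) (s : R) : R := c s 0 i * v j s - c s 0 j * v i s.
Local Notation W := angular_momentum.

Lemma angular_momentum_cst i j s s' : I s -> I s' -> W i j s = W i j s'.
Proof.
apply: is_derive_0_is_cst_interval => // {}s Is.
have -> : W i j = coord c i * v j - coord c j * v i by [].
apply: is_derive_eq (is_deriveB (is_deriveM (c_derive i Is) (v_derive j Is))
                                 (is_deriveM (c_derive j Is) (v_derive i Is))) _.
by rewrite /GRing.scale /= /coord; ring.
Qed.

Lemma sub_plane_of_angular_momentum s0 a b : I s0 -> W a b s0 != 0 ->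
  forall s, I s -> (c s <= col_mx (c s0) (\row_j v j s0))%MS.
Proof.
move=> Is0 Wab_neq0 s Is.
have plucker j : c s 0 j * W a b s = c s 0 b * W a j s - c s 0 a * W b j s.
  by rewrite /W; ring.
pose al := (c s 0 a * v b s0 - c s 0 b * v a s0) / W a b s0.
pose be := (c s 0 b * c s0 0 a - c s 0 a * c s0 0 b) / W a b s0.
suff -> : c s = al *: c s0 + be *: \row_j v j s0 by apply: sub_col_mx2.
apply/rowP => j; rewrite !mxE; apply: (mulIf Wab_neq0).
rewrite -(angular_momentum_cst a b Is Is0) plucker.
rewrite !(angular_momentum_cst _ _ Is Is0) /al /be.
by move: Wab_neq0; rewrite /W => ?; field.
Qed.

Section Radial.
Hypothesis W_eq0 : forall i j s, I s -> W i j s = 0.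

Let nrm2 s := \sum_(k < N) c s 0 k * c s 0 k.
Let dot s := \sum_(k < N) c s 0 k * v k s.

Let nrm2_neq0 s : I s -> nrm2 s != 0.
Proof.
move=> Is; apply/eqP => /psumr_eq0P nrm2_eq0; have /rV0Pn[k] := c_neq0 Is.
apply/negP; rewrite negbK -sqrf_eq0 expr2; apply/eqP/nrm2_eq0 => // i _.
by rewrite -expr2 sqr_ge0.
Qed.

Let velocity_radial s i : I s -> c s 0 i * dot s = v i s * nrm2 s.
Proof.
move=> Is; rewrite !mulr_sumr; apply: eq_bigr => k _.
have /eqP := W_eq0 i k Is; rewrite subr_eq0 => /eqP Wik.
by rewrite mulrCA Wik; ring.
Qed.

Let direction_cst i j s s' : I s -> I s' ->
  c s 0 i * c s 0 j / nrm2 s = c s' 0 i * c s' 0 j / nrm2 s'.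
Proof.
apply: (is_derive_0_is_cst_interval (f := fun s => c s 0 i * c s 0 j / nrm2 s)) => // {}s Is.
have nrm2_derive : is_derive s 1 nrm2 (\sum_(k < N) (c s 0 k *: v k s + c s 0 k *: v k s)).
  have -> : nrm2 = \sum_(k < N) (coord c k * coord c k) by rewrite fct_sumE.
  exact: is_derive_sum (fun k => is_deriveM (c_derive k Is) (c_derive k Is)).
have -> : (fun s => c s 0 i * c s 0 j / nrm2 s) = coord c i * coord c j * (fun s => (nrm2 s)^-1).
  by [].
apply: is_derive_eq (is_deriveM (is_deriveM (c_derive i Is) (c_derive j Is))
                                (is_deriveV (nrm2_neq0 Is) nrm2_derive)) _.
have -> : \sum_(k < N) (c s 0 k *: v k s + c s 0 k *: v k s) = 2 * dot s.
  by rewrite mulr_sumr; apply: eq_bigr => k _; rewrite /GRing.scale /=; ring.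
have nrm2s_neq0 := nrm2_neq0 Is.
change (c s 0 i * c s 0 j * (- nrm2 s ^- 2 * (2 * dot s))
  + (nrm2 s)^-1 * (c s 0 i * v j s + c s 0 j * v i s) = 0).
rewrite -[v i s](mulfK nrm2s_neq0) -[v j s](mulfK nrm2s_neq0).
by rewrite -!velocity_radial //; field.
Qed.

Lemma radial_of_angular_momentum_eq0 s0 s : I s0 -> I s -> exists k, c s = k *: c s0.
Proof.
move=> Is0 Is; exists ((\sum_(i < N) c s0 0 i * c s 0 i) / nrm2 s0).
apply/rowP => j; rewrite mxE.
transitivity (\sum_(i < N) c s 0 j * c s 0 i / nrm2 s * c s 0 i).
  rewrite (eq_bigr (fun i => c s 0 j / nrm2 s * (c s 0 i * c s 0 i))) => [|i _]; last by ring.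
  by rewrite -mulr_sumr divfK ?nrm2_neq0.
under eq_bigr => i _ do rewrite (direction_cst j i Is Is0).
by rewrite !mulr_suml; apply: eq_bigr => i _; ring.
Qed.

End Radial.

Lemma planar_of_central_acceleration : (2 <= N)%N -> planar I c.
Proof.
move=> N_ge2.
have [[s0 [Is0 [a [b Wab_neq0]]]] | W_neq0] :=
  pselect (exists s0, I s0 /\ exists a b, W a b s0 != 0).
  exists (col_mx (c s0) (\row_j v j s0)); split.
    by apply: (rank_col_mx2 (a := a) (b := b)); rewrite !mxE.
  exact: sub_plane_of_angular_momentum Wab_neq0.
have W_eq0 i j s : I s -> W i j s = 0.
  move=> Is; apply/eqP; apply: contraT => Wij_neq0.
  by case: W_neq0; exists s; split => //; exists i, j.
have [[s0 Is0] | I_eq0] := pselect (exists s0, I s0); last first.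
  pose i0 : 'I_N := Ordinal (ltnW N_ge2); pose e0 : 'rV[R]_N := delta_mx 0 i0.
  have e0_neq0 : e0 != 0 by apply/rV0Pn; exists i0; rewrite mxE !eqxx oner_neq0.
  have [y rank2] := col_mx_rank2_completion N_ge2 e0_neq0.
  by exists (col_mx e0 y); split => // s Is; case: I_eq0; exists s.
have [y rank2] := col_mx_rank2_completion N_ge2 (c_neq0 Is0).
exists (col_mx (c s0) y); split => // s Is.
have [k ->] := radial_of_angular_momentum_eq0 W_eq0 Is0 Is.
by rewrite -[k *: _]addr0 -(scale0r y); apply: sub_col_mx2.
Qed.

End CentralAcceleration.

Section QuasiEuclideanChristoffel.
Variables (R : realType) (N : nat) (r : 'M[R]_N) (g : R).
Hypotheses (r_sym : r^T = r) (r_posdef : posdef r) (g_bound : -2 < g < 2).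
Implicit Types (t u : 'rV[R]_N) (x : R).

Local Notation S := (Sfun r).
Local Notation L := (Lfun r).
Local Notation n := (nmetric g r).
Local Notation beta := (Gpar g ^+ 2 / 4).
Local Notation shift t k x := (t + x *: delta_mx 0 k).
Local Notation dL t k j := ((r j k - L t j * L t k) / S t).

Definition qform t : R := \sum_(p < N) \sum_(q < N) r p q * t 0 p * t 0 q.
Definition lowered t (m : 'I_N) : R := \sum_(q < N) r m q * t 0 q.

Lemma r_symE p q : r p q = r q p.
Proof. by rewrite -[in LHS]r_sym mxE. Qed.

Lemma Sfun_gt0 t : t != 0 -> 0 < S t.
Proof. by move=> t_neq0; rewrite sqrtr_gt0; apply: r_posdef. Qed.

Lemma Sfun_sqr t : t != 0 -> S t ^+ 2 = qform t.
Proof. by move=> t_neq0; rewrite sqr_sqrtr // ltW //; apply: r_posdef. Qed.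

Lemma qform_lowered t : qform t = \sum_(p < N) t 0 p * lowered t p.
Proof.
apply: eq_bigr => p _; rewrite mulr_sumr.
by apply: eq_bigr => q _; ring.
Qed.

Lemma sum_Lfun_mul t : t != 0 -> \sum_(q < N) L t q * t 0 q = S t.
Proof.
move=> t_neq0; have S_neq0 : S t != 0 by rewrite gt_eqF ?Sfun_gt0.
transitivity ((\sum_(q < N) t 0 q * lowered t q) / S t).
  by rewrite mulr_suml; apply: eq_bigr => q _; rewrite /Lfun /lowered; ring.
by rewrite -qform_lowered -Sfun_sqr // expr2 mulfK.
Qed.

Lemma hpar_sqr : hpar g ^+ 2 = 1 - g ^+ 2 / 4.
Proof. by rewrite sqr_sqrtr // subr_ge0; case/andP: g_bound => *; nra. Qed.

Lemma hpar_sqr_gt0 : 0 < hpar g ^+ 2.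
Proof. by rewrite hpar_sqr subr_gt0; case/andP: g_bound => *; nra. Qed.

Lemma hpar_sqrV_sub : (hpar g ^+ 2)^-1 - beta = 1.
Proof.
have h2_neq0 : hpar g ^+ 2 != 0 by rewrite gt_eqF // hpar_sqr_gt0.
rewrite /Gpar expr_div_n.
have -> : g ^+ 2 = 4 - 4 * hpar g ^+ 2 by rewrite hpar_sqr; field.
by field; apply: contra h2_neq0 => /eqP ->; rewrite expr0n.
Qed.

Lemma nmetricE t m s : n t m s = r m s / hpar g ^+ 2 - beta * L t m * L t s.
Proof. by rewrite mxE. Qed.

Lemma nmetric_mul t m : t != 0 -> \sum_(q < N) n t m q * t 0 q = lowered t m.
Proof.
move=> t_neq0; have S_neq0 : S t != 0 by rewrite gt_eqF ?Sfun_gt0.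
transitivity (lowered t m / hpar g ^+ 2 - beta * L t m * \sum_(q < N) L t q * t 0 q).
  rewrite mulr_sumr /lowered mulr_suml -sumrB.
  by apply: eq_bigr => q _; rewrite nmetricE; ring.
rewrite sum_Lfun_mul // /Lfun -mulrA divfK //.
transitivity (lowered t m * ((hpar g ^+ 2)^-1 - beta)); first by rewrite /lowered; ring.
by rewrite hpar_sqrV_sub mulr1.
Qed.

Lemma nmetric_unit t : t != 0 -> n t \in unitmx.
Proof.
move=> t_neq0; have S_neq0 : S t != 0 by rewrite gt_eqF ?Sfun_gt0.
have h2_neq0 : hpar g ^+ 2 != 0 by rewrite gt_eqF ?hpar_sqr_gt0.
rewrite -row_free_unit; apply: inj_row_free => u un_eq0.
(* Contracting [u n = 0] with [t] gives [u . L = 0] because [n t = r t];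
   then [u n = 0] reduces to [u r = 0]. *)
pose l := \sum_(m < N) u 0 m * L t m.
have u_lowered_eq0 : \sum_(m < N) u 0 m * lowered t m = 0.
  have := congr1 (fun v : 'cV_1 => v 0 0) (congr1 (mulmx^~ t^T) un_eq0).
  rewrite mul0mx -mulmxA !mxE => unt_eq0; rewrite -[RHS]unt_eq0; apply: eq_bigr => m _.
  rewrite !mxE -(nmetric_mul m t_neq0); congr (_ * _).
  by apply: eq_bigr => q _; rewrite !mxE.
have l_eq0 : l = 0.
  rewrite /l /Lfun; under eq_bigr => m _ do rewrite -/(lowered t m) mulrA.
  by rewrite -mulr_suml u_lowered_eq0 mul0r.
have ur_eq0 s : \sum_(m < N) u 0 m * r m s = 0.
  have : (\sum_(m < N) u 0 m * r m s) / hpar g ^+ 2 - beta * l * L t s = 0.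
    have := congr1 (fun v : 'rV_N => v 0 s) un_eq0; rewrite !mxE => un_s.
    rewrite -[RHS]un_s /l mulr_suml mulr_sumr mulr_suml -sumrB.
    by apply: eq_bigr => m _; rewrite mxE; ring.
  rewrite l_eq0 mulr0 mul0r subr0 => /eqP.
  by rewrite mulf_eq0 invr_eq0 (negbTE h2_neq0) orbF => /eqP.
apply/eqP; apply: contraT => u_neq0; have := r_posdef u_neq0.
rewrite exchange_big big1 ?ltxx // => q _.
by rewrite -mulr_suml (eq_bigr _ (fun i _ => mulrC _ _)) ur_eq0 mul0r.
Qed.

Lemma invmx_nmetric_lowered t p : t != 0 ->
  \sum_(m < N) invmx (n t) p m * lowered t m = t 0 p.
Proof.
move=> t_neq0.
have nt : n t *m t^T = \col_m lowered t m.
  apply/matrixP => i j; rewrite !mxE (ord1 j) -(nmetric_mul i t_neq0).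
  by apply: eq_bigr => q _; rewrite !mxE.
have := congr1 (fun v : 'cV_N => v p 0) (mulKmx (nmetric_unit t_neq0) t^T).
by rewrite nt !mxE => <-; apply: eq_bigr => m _; rewrite mxE.
Qed.

Lemma shiftE t k x q : (shift t k x) 0 q = t 0 q + x * (q == k)%:R.
Proof. by rewrite !mxE eqxx. Qed.

Lemma lowered_shift t k x m : lowered (shift t k x) m = lowered t m + x * r m k.
Proof.
rewrite /lowered; under eq_bigr => q _ do rewrite shiftE mulrDr.
rewrite big_split /=; congr (_ + _); rewrite -(sum_mul_delta (fun q => x * r m q)).
by apply: eq_bigr => q _; ring.
Qed.

Lemma qform_shift t k x :
  qform (shift t k x) = qform t + x * (2 * lowered t k) + x ^+ 2 * r k k.
Proof.
rewrite !qform_lowered; under eq_bigr => p _ do rewrite lowered_shift shiftE.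
transitivity (\sum_(p < N) (t 0 p * lowered t p
   + x * (t 0 p * r p k + lowered t p * (p == k)%:R) + x ^+ 2 * (r p k * (p == k)%:R))).
  by apply: eq_bigr => p _; ring.
rewrite !big_split /= -!mulr_sumr big_split /= !sum_mul_delta.
congr (_ + _ * _ + _); rewrite mulr2n mulrDl mul1r; congr (_ + _).
by apply: eq_bigr => p _; rewrite r_symE mulrC.
Qed.

Lemma is_derive_Sfun_shift t k : t != 0 ->
  is_derive (0 : R) 1 (fun x => S (shift t k x)) (lowered t k / S t).
Proof.
move=> t_neq0; have S_neq0 : S t != 0 by rewrite gt_eqF ?Sfun_gt0.
pose q x := qform t + x * (2 * lowered t k) + x ^+ 2 * r k k.
have -> : (fun x => S (shift t k x)) = Num.sqrt \o q.
  by apply/funext => x /=; rewrite /q -qform_shift.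
have q0 : q 0 = qform t by rewrite /q mul0r expr0n mul0r !addr0.
have q0_gt0 : 0 < q 0 by rewrite q0; apply: r_posdef.
apply: is_derive_eq (is_derive1_comp (is_derive1_sqrt q0_gt0) (is_derive0_quadratic _ _ _)) _.
by rewrite q0 -/(S t); field.
Qed.

Lemma is_derive_Lfun_shift t k m : t != 0 ->
  is_derive (0 : R) 1 (fun x => L (shift t k x) m) (dL t k m).
Proof.
move=> t_neq0; have S_neq0 : S t != 0 by rewrite gt_eqF ?Sfun_gt0.
have -> : (fun x => L (shift t k x) m) =
    (fun x => lowered t m + x * r m k) * (fun x => (S (shift t k x))^-1).
  apply/funext => x.
  change (L (shift t k x) m = (lowered t m + x * r m k) * (S (shift t k x))^-1).
  by rewrite -lowered_shift.
have S_shift0_neq0 : S (shift t k 0) != 0 by rewrite scale0r addr0.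
have S_shift_derive := is_derive_Sfun_shift k t_neq0.
apply: is_derive_eq (is_deriveM (is_derive0_affine _ _)
                    (is_deriveV (f := fun x => S (shift t k x)) S_shift0_neq0 S_shift_derive)) _.
rewrite !scale0r addr0 /GRing.scale /= mul0r addr0 /Lfun -!/(lowered t _).
by field.
Qed.

Lemma pderiv_nmetric t k m s : t != 0 ->
  pderiv (fun t => n t m s) k t = - beta * (dL t k m * L t s + L t m * dL t k s).
Proof.
move=> t_neq0; rewrite /pderiv derive1E.
pose Lm x := L (shift t k x) m; pose Ls x := L (shift t k x) s.
have -> : (fun x => n (shift t k x) m s) = cst (r m s / hpar g ^+ 2) - cst beta * Lm * Ls.
  by apply/funext => x; rewrite nmetricE.
have Ln := is_deriveB (is_derive_cst (r m s / hpar g ^+ 2) (0 : R) 1)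
  (is_deriveM (is_deriveM (is_derive_cst beta (0 : R) 1) (is_derive_Lfun_shift k m t_neq0))
              (is_derive_Lfun_shift k s t_neq0)).
rewrite (@derive_val _ _ _ _ _ _ _ Ln) -[(cst beta * Lm) 0]/(beta * Lm 0) /Lm /Ls.
by rewrite !scale0r !addr0 /GRing.scale /=; ring.
Qed.

Definition christoffel_radial t (q s : 'I_N) : R := - beta / S t ^+ 2 * (r s q - L t q * L t s).

(* The three derivatives of [n] combine to -(G^2/2) S^-1 (r_sq - L_q L_s) L_m,
   and [n^-1] sends [L = r t / S] back to [t / S]. *)
Lemma christoffelE t q p s : t != 0 ->
  christoffel g r t q p s = christoffel_radial t q s * t 0 p.
Proof.
move=> t_neq0; have S_neq0 : S t != 0 by rewrite gt_eqF ?Sfun_gt0.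
rewrite /christoffel -(invmx_nmetric_lowered p t_neq0) !mulr_sumr.
apply: eq_bigr => m _; rewrite !pderiv_nmetric // /christoffel_radial /Lfun -!/(lowered t _).
rewrite (r_symE q m) (r_symE s m) (r_symE q s).
by field.
Qed.

Definition radial_accel (c : R -> 'rV[R]_N) (s : R) : R :=
  - \sum_(q < N) \sum_(k < N)
      christoffel_radial (c s) q k * derive1 (coord c q) s * derive1 (coord c k) s.

Lemma geodesic_accelE I c : is_geodesic g r I c ->
  forall s p, I s -> derive1 (derive1 (coord c p)) s = radial_accel c s * c s 0 p.
Proof.
move=> [c_neq0 [_ geodesic_eq]] s p Is.
move/eqP: (geodesic_eq s p Is); rewrite addr_eq0 => /eqP ->.
rewrite /radial_accel mulNr mulr_suml; congr (- _); apply: eq_bigr => q _.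
by rewrite mulr_suml; apply: eq_bigr => k _; rewrite christoffelE ?c_neq0 //; ring.
Qed.

End QuasiEuclideanChristoffel.

Unset Implicit Arguments.

Theorem proposition3p2 (R : realType) (N : nat) (r : 'M[R]_N) (g : R)
    (I : set R) (c : R -> 'rV[R]_N) :
  (2 <= N)%N ->
  r^T = r ->
  posdef r ->
  (forall i : 'I_N, val i = N.-1 ->
     r i i = 1 /\ (forall a : 'I_N, (val a < N.-1)%N -> r i a = 0)) ->
  -2 < g < 2 ->
  open I -> is_interval I ->
  is_geodesic g r I c ->
  exists U : 'M[R]_(2, N), \rank U = 2%N /\ (forall s, I s -> (c s <= U)%MS).
Proof.
move=> N_ge2 r_sym r_posdef _ g_bound _ I_itv c_geodesic.
have [c_neq0 [c_C2 _]] := c_geodesic.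
apply: (planar_of_central_acceleration (lam := radial_accel r g c) I_itv c_neq0 _ _ N_ge2).
- by move=> s p Is; have [/derivableP + _] := c_C2 s p Is; rewrite derive1E.
- move=> s p Is; rewrite -(geodesic_accelE r_sym r_posdef g_bound c_geodesic p Is).
  by have [_ /derivableP] := c_C2 s p Is; rewrite derive1E.
Qed.
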